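(* Let $K=(\mathbf{k}_1,\dots,\mathbf{k}_6)\in(\mathbb{R}^2)^6$ be a 3-RPR configuration whose base anchor points $\mathbf{k}_1,\mathbf{k}_2,\mathbf{k}_3\in\mathbb{R}^2$ are fixed and whose platform anchor points are $\mathbf{k}_j=\mathbf{R}\mathbf{p}_j+\mathbf{t}$ ($j=4,5,6$) for fixed $\mathbf{p}_4,\mathbf{p}_5,\mathbf{p}_6\in\mathbb{R}^2$ and a pose $(\mathbf{R},\mathbf{t})$ with $\mathbf{R}\in SO(2)$, $\mathbf{t}\in\mathbb{R}^2$. Let $D$ be either $D^{\vartriangle}_{\blacktriangle}$ or $D^{\vartriangle}_{\vartriangle}$. If $K'=(\mathbf{k}'_1,\dots,\mathbf{k}'_6)$ is a closest configuration to $K$ on the collinearity variety $C_P=0$, i.e. a global minimizer of $D(K,K')$ over all $K'\in\mathbb{R}^{12}$ with $C_P(K')=0$, then $\mathbf{k}'_4,\mathbf{k}'_5,\mathbf{k}'_6$ are the pedal points (orthogonal projections) of $\mathbf{k}_4,\mathbf{k}_5,\mathbf{k}_6$ on the line of regression of $\mathbf{k}_4,\mathbf{k}_5,\mathbf{k}_6$. Moreover, the distance $\min\{D(K,K'):C_P(K')=0\}$ depends only on the geometry of the manipulator, i.e. it is independent of the pose $(\mathbf{R},\mathbf{t})$.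
   Context: A configuration is $K'=(\mathbf{k}'_1,\dots,\mathbf{k}'_6)$ with $\mathbf{k}'_i=(c_i,d_i)^T\in\mathbb{R}^2$, viewed as a point of $\mathbb{R}^{12}$. For indices $i,j$ define the segment distance $d(\vert_{ij},\vert'_{ij})^2=\frac13\big[\|\mathbf{k}_i-\mathbf{k}'_i\|^2+\|\mathbf{k}_j-\mathbf{k}'_j\|^2+(\mathbf{k}_i-\mathbf{k}'_i)^T(\mathbf{k}_j-\mathbf{k}'_j)\big]$ and for $\{i,j,k\}$ the triangle distance $d(\blacktriangle_{ijk},\blacktriangle'_{ijk})^2=\frac16\big[\sum_{x=i,j,k}\|\mathbf{k}_x-\mathbf{k}'_x\|^2+(\mathbf{k}_i-\mathbf{k}'_i)^T(\mathbf{k}_k-\mathbf{k}'_k)+(\mathbf{k}_i-\mathbf{k}'_i)^T(\mathbf{k}_j-\mathbf{k}'_j)+(\mathbf{k}_k-\mathbf{k}'_k)^T(\mathbf{k}_j-\mathbf{k}'_j)\big]$. Then $D^{\vartriangle}_{\blacktriangle}(K,K')^2=\frac17\big[\sum_{(i,j)\in I_2}d(\vert_{ij},\vert'_{ij})^2+d(\blacktriangle_{123},\blacktriangle'_{123})^2\big]$ with $I_2=\{(1,4),(2,5),(3,6),(4,5),(4,6),(5,6)\}$, and $D^{\vartriangle}_{\vartriangle}(K,K')^2=\frac19\sum_{(i,j)\in I_4}d(\vert_{ij},\vert'_{ij})^2$ with $I_4=\{(1,2),(2,3),(1,3),(1,4),(2,5),(3,6),(4,5),(5,6),(4,6)\}$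 (distances are the nonnegative square roots). The collinearity polynomial of the platform is $C_P(K')=\det\begin{pmatrix}1&1&1\\ c_4&c_5&c_6\\ d_4&d_5&d_6\end{pmatrix}$. The line of regression of three points is the line minimizing the sum of squared orthogonal distances to these points; the pedal point of a point on a line is its orthogonal projection onto that line. *)

From Stdlib Require Import Reals.
Open Scope R_scope.

Definition point := (R * R)%type.

Definition vadd (x y : point) : point := (fst x + fst y, snd x + snd y).
Definition vsub (x y : point) : point := (fst x - fst y, snd x - snd y).
Definition vscale (a : R) (x : point) : point := (a * fst x, a * snd x).
Definition dot (x y : point) : R := fst x * fst y + snd x * snd y.
Definition norm2 (x : point) : R := dot x x.

(* A configuration K = (k_1,...,k_6) in (R^2)^6 = R^12; only the indices
   1..6 are ever used. *)
Definition config := nat -> point.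

Definition dlt (K K' : config) (i : nat) : point := vsub (K i) (K' i).

Definition seg_d2 (K K' : config) (i j : nat) : R :=
  / 3 * (norm2 (dlt K K' i) + norm2 (dlt K K' j) + dot (dlt K K' i) (dlt K K' j)).

Definition tri_d2 (K K' : config) (i j k : nat) : R :=
  / 6 * (norm2 (dlt K K' i) + norm2 (dlt K K' j) + norm2 (dlt K K' k)
         + dot (dlt K K' i) (dlt K K' k) + dot (dlt K K' i) (dlt K K' j)
         + dot (dlt K K' k) (dlt K K' j)).

Definition D_tri_filled (K K' : config) : R :=
  sqrt (/ 7 * (seg_d2 K K' 1 4 + seg_d2 K K' 2 5 + seg_d2 K K' 3 6
               + seg_d2 K K' 4 5 + seg_d2 K K' 4 6 + seg_d2 K K' 5 6
               + tri_d2 K K' 1 2 3)).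

Definition D_tri_tri (K K' : config) : R :=
  sqrt (/ 9 * (seg_d2 K K' 1 2 + seg_d2 K K' 2 3 + seg_d2 K K' 1 3
               + seg_d2 K K' 1 4 + seg_d2 K K' 2 5 + seg_d2 K K' 3 6
               + seg_d2 K K' 4 5 + seg_d2 K K' 5 6 + seg_d2 K K' 4 6)).

Inductive dist_kind := Kind_tri_filled | Kind_tri_tri.

Definition Dist (k : dist_kind) (K K' : config) : R :=
  match k with
  | Kind_tri_filled => D_tri_filled K K'
  | Kind_tri_tri => D_tri_tri K K'
  end.

(* collinearity polynomial of the platform:
   det [[1,1,1],[c4,c5,c6],[d4,d5,d6]] *)
Definition CP (K' : config) : R :=
  let '(c4, d4) := K' 4%nat in
  let '(c5, d5) := K' 5%nat in
  let '(c6, d6) := K' 6%nat in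
  (c5 * d6 - c6 * d5) - (c4 * d6 - c6 * d4) + (c4 * d5 - c5 * d4).

Definition is_closest (k : dist_kind) (K K' : config) : Prop :=
  CP K' = 0 /\ forall K'' : config, CP K'' = 0 -> Dist k K K' <= Dist k K K''.

(* Lines: {a + t u | t in R} with u <> 0. *)
Definition pedal (a u x : point) : point :=
  vadd a (vscale (dot (vsub x a) u / norm2 u) u).

Definition line_dist2 (a u x : point) : R := norm2 (vsub x (pedal a u x)).

Definition is_regression_line (x4 x5 x6 a u : point) : Prop :=
  u <> (0, 0) /\
  forall b v : point, v <> (0, 0) ->
    line_dist2 a u x4 + line_dist2 a u x5 + line_dist2 a u x6
    <= line_dist2 b v x4 + line_dist2 b v x5 + line_dist2 b v x6.

Definition rot (c s : R) (x : point) : point :=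
  (c * fst x - s * snd x, s * fst x + c * snd x).

Definition in_SO2 (c s : R) : Prop := c ^ 2 + s ^ 2 = 1.

Definition rpr_config (k1 k2 k3 p4 p5 p6 : point) (c s : R) (t : point) : config :=
  fun i => match i with
           | 1%nat => k1
           | 2%nat => k2
           | 3%nat => k3
           | 4%nat => vadd (rot c s p4) t
           | 5%nat => vadd (rot c s p5) t
           | 6%nat => vadd (rot c s p6) t
           | _ => (0, 0)
           end.

(* The squared distance is a quadratic form in the displacements
   d_i = k_i - k'_i.  The collinearity condition involves only the platform
   points, so completing the square in the base displacements d1, d2, d3 and
   placing the base points optimally leaves the platform cost
   a (|d4|^2 + |d5|^2 + |d6|^2) + b |d4 + d5 + d6|^2 with a > 0, b >= 0.  This
   cost is at least a times the sum of squared distances from k4, k5, k6 to any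
   line through k'4, k'5, k'6, while the pedal points on the line of regression
   (which passes through the centroid, so that d4 + d5 + d6 = 0) attain a times
   the least such sum; hence a closest configuration consists of these pedal
   points.  The platform cost is invariant under rotations and the collinearity
   condition under rigid motions, so the rigid motion between two poses
   transfers closest configurations in both directions without increasing the
   distance. *)

From Stdlib Require Import Reals Lra Nsatz.
Open Scope R_scope.

Ltac unfold_vec :=
  unfold line_dist2, pedal, norm2, dot, rot, vadd, vsub, vscale in *; simpl in *.

Lemma norm2_ge0 (x : point) : 0 <= norm2 x.
Proof. destruct x as [a b]; unfold_vec; nra. Qed.

Lemma norm2_eq0 (x : point) : norm2 x = 0 -> x = (0, 0).
Proof.
  destruct x as [a b]; unfold_vec; intro H.
  assert (Ha : a * a = 0) by nra; assert (Hb : b * b = 0) by nra.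
  apply Rmult_integral in Ha; apply Rmult_integral in Hb.
  f_equal; tauto.
Qed.

Lemma norm2_neq0 (u : point) : u <> (0, 0) -> norm2 u <> 0.
Proof. intros Hu H; exact (Hu (norm2_eq0 u H)). Qed.

Lemma vsub_eq0 (x y : point) : vsub x y = (0, 0) -> x = y.
Proof.
  destruct x as [a b], y as [c d]; unfold_vec; intro H; injection H as Ha Hb.
  f_equal; lra.
Qed.

Definition Dist2 (k : dist_kind) (K K' : config) : R :=
  match k with
  | Kind_tri_filled => / 7 * (seg_d2 K K' 1 4 + seg_d2 K K' 2 5 + seg_d2 K K' 3 6
               + seg_d2 K K' 4 5 + seg_d2 K K' 4 6 + seg_d2 K K' 5 6
               + tri_d2 K K' 1 2 3)
  | Kind_tri_tri => / 9 * (seg_d2 K K' 1 2 + seg_d2 K K' 2 3 + seg_d2 K K' 1 3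
               + seg_d2 K K' 1 4 + seg_d2 K K' 2 5 + seg_d2 K K' 3 6
               + seg_d2 K K' 4 5 + seg_d2 K K' 5 6 + seg_d2 K K' 4 6)
  end.

Lemma Dist_sqrt_Dist2 k K K' : Dist k K K' = sqrt (Dist2 k K K').
Proof. destruct k; reflexivity. Qed.

(* Coefficients obtained by completing the square in the base displacements
   d1, d2, d3: [Dist2 = platform_cost d4 d5 d6 + base_cost e1 e2 e3], where
   [e_i = d_i + base_shift d_(i+3) d_j d_k] ({j, k} the two other platform
   indices). *)
Definition platform_w (k : dist_kind) : R * R :=
  match k with Kind_tri_filled => (23/210, 1/40) | Kind_tri_tri => (4/45, 41/2160) end.
Definition base_w (k : dist_kind) : R * R :=
  match k with Kind_tri_filled => (5/84, 1/84) | Kind_tri_tri => (5/54, 1/54) end.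
Definition shift_w (k : dist_kind) : R * R :=
  match k with Kind_tri_filled => (7/20, -1/20) | Kind_tri_tri => (7/40, -1/40) end.

Definition sum_sq_cost (w : R * R) (x y z : point) : R :=
  fst w * (norm2 x + norm2 y + norm2 z) + snd w * norm2 (vadd (vadd x y) z).

Definition platform_cost k := sum_sq_cost (platform_w k).
Definition base_cost k := sum_sq_cost (base_w k).

Definition base_shift k (x y z : point) : point :=
  vadd (vscale (fst (shift_w k)) x) (vscale (snd (shift_w k)) (vadd y z)).

Lemma Dist2_decomp k K K' :
  let d := dlt K K' in
  Dist2 k K K' = platform_cost k (d 4%nat) (d 5%nat) (d 6%nat)
    + base_cost k (vadd (d 1%nat) (base_shift k (d 4%nat) (d 5%nat) (d 6%nat)))
                  (vadd (d 2%nat) (base_shift k (d 5%nat) (d 4%nat) (d 6%nat)))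
                  (vadd (d 3%nat) (base_shift k (d 6%nat) (d 4%nat) (d 5%nat))).
Proof.
  destruct k; unfold Dist2, platform_cost, base_cost, sum_sq_cost, base_shift, seg_d2, tri_d2;
  simpl; generalize (dlt K K' 1) (dlt K K' 2) (dlt K K' 3) (dlt K K' 4) (dlt K K' 5) (dlt K K' 6);
  intros [a1 a2] [b1 b2] [c1 c2] [d1 d2] [e1 e2] [f1 f2]; unfold_vec; field.
Qed.

Lemma sum_sq_cost_ge w x y z : 0 <= snd w ->
  fst w * (norm2 x + norm2 y + norm2 z) <= sum_sq_cost w x y z.
Proof.
  intro Hw; unfold sum_sq_cost.
  pose proof (Rmult_le_pos _ _ Hw (norm2_ge0 (vadd (vadd x y) z))); lra.
Qed.

Lemma sum_sq_cost_ge0 w x y z : 0 <= fst w -> 0 <= snd w -> 0 <= sum_sq_cost w x y z.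
Proof.
  intros H1 H2; eapply Rle_trans; [|exact (sum_sq_cost_ge w x y z H2)].
  pose proof (norm2_ge0 x); pose proof (norm2_ge0 y); pose proof (norm2_ge0 z).
  apply Rmult_le_pos; lra.
Qed.

Lemma platform_w_pos k : 0 < fst (platform_w k) /\ 0 <= snd (platform_w k).
Proof. destruct k; simpl; lra. Qed.

Lemma platform_cost_ge k x y z :
  fst (platform_w k) * (norm2 x + norm2 y + norm2 z) <= platform_cost k x y z.
Proof. apply sum_sq_cost_ge, platform_w_pos. Qed.

Lemma platform_cost_ge0 k x y z : 0 <= platform_cost k x y z.
Proof.
  destruct (platform_w_pos k); apply sum_sq_cost_ge0; lra.
Qed.

Lemma base_cost_ge0 k x y z : 0 <= base_cost k x y z.
Proof. destruct k; apply sum_sq_cost_ge0; simpl; lra. Qed.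

Lemma Dist2_ge_platform_cost k K K' :
  platform_cost k (dlt K K' 4) (dlt K K' 5) (dlt K K' 6) <= Dist2 k K K'.
Proof.
  rewrite Dist2_decomp; simpl.
  match goal with |- _ <= _ + ?b => assert (0 <= b) by apply base_cost_ge0 end.
  lra.
Qed.

Lemma Dist2_ge0 k K K' : 0 <= Dist2 k K K'.
Proof. eapply Rle_trans; [apply platform_cost_ge0 | apply Dist2_ge_platform_cost]. Qed.

Lemma Dist_le_Dist2 k K Y L Z : Dist k K Y <= Dist k L Z <-> Dist2 k K Y <= Dist2 k L Z.
Proof.
  rewrite !Dist_sqrt_Dist2; split.
  - apply sqrt_le_0; apply Dist2_ge0.
  - apply sqrt_le_1_alt.
Qed.

(* The base points making the residuals [e_i] of [Dist2_decomp] vanish. *)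
Definition fit_base k (K K' : config) : config := fun i =>
  let d := dlt K K' in
  match i with
  | 1%nat => vadd (K 1%nat) (base_shift k (d 4%nat) (d 5%nat) (d 6%nat))
  | 2%nat => vadd (K 2%nat) (base_shift k (d 5%nat) (d 4%nat) (d 6%nat))
  | 3%nat => vadd (K 3%nat) (base_shift k (d 6%nat) (d 4%nat) (d 5%nat))
  | _ => K' i
  end.

Lemma CP_fit_base k K K' : CP (fit_base k K K') = CP K'.
Proof. reflexivity. Qed.

Lemma Dist2_fit_base k K K' :
  Dist2 k K (fit_base k K K') = platform_cost k (dlt K K' 4) (dlt K K' 5) (dlt K K' 6).
Proof.
  assert (Hcancel : forall x s : point, vadd (vsub x (vadd x s)) s = (0, 0)).
  { intros [x1 x2] [s1 s2]; unfold_vec; f_equal; ring. }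
  rewrite Dist2_decomp; cbv [dlt fit_base]; rewrite !Hcancel.
  replace (base_cost k (0, 0) (0, 0) (0, 0)) with 0
    by (unfold base_cost, sum_sq_cost; unfold_vec; ring).
  ring.
Qed.

Definition cross (u w : point) : R := fst u * snd w - snd u * fst w.

Definition centroid (x4 x5 x6 : point) : point := vscale (/ 3) (vadd (vadd x4 x5) x6).

Definition line_cost (a u x4 x5 x6 : point) : R :=
  line_dist2 a u x4 + line_dist2 a u x5 + line_dist2 a u x6.

Lemma CP_cross (Y : config) :
  CP Y = cross (vsub (Y 5%nat) (Y 4%nat)) (vsub (Y 6%nat) (Y 4%nat)).
Proof.
  unfold CP, cross; destruct (Y 4%nat), (Y 5%nat), (Y 6%nat); unfold_vec; ring.
Qed.

Lemma line_dist2_cross a u x : u <> (0, 0) ->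
  line_dist2 a u x = cross u (vsub x a) ^ 2 / norm2 u.
Proof.
  intro Hu; apply norm2_neq0 in Hu.
  destruct a, u, x; unfold cross; unfold_vec; field; exact Hu.
Qed.

Lemma pedal_pythagoras a u x y : u <> (0, 0) ->
  norm2 (vsub x (pedal a u y)) = line_dist2 a u x + norm2 (vsub (pedal a u x) (pedal a u y)).
Proof.
  intro Hu; apply norm2_neq0 in Hu.
  destruct a, u, x, y; unfold_vec; field; exact Hu.
Qed.

Lemma pedal_on_line a u y : u <> (0, 0) -> cross u (vsub y a) = 0 -> pedal a u y = y.
Proof.
  intros Hu Hc; apply norm2_neq0 in Hu; apply vsub_eq0.
  (* [pedal a u y - y] is [cross u (y - a) / |u|^2] times the normal [(u2, -u1)]. *)
  destruct a as [a1 a2], u as [u1 u2], y as [y1 y2]; unfold cross in Hc; unfold_vec.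
  replace (a1 + _ - y1) with (u2 * (u1 * (y2 - a2) - u2 * (y1 - a1)) / (u1 * u1 + u2 * u2))
    by (field; exact Hu).
  replace (a2 + _ - y2) with (- u1 * (u1 * (y2 - a2) - u2 * (y1 - a1)) / (u1 * u1 + u2 * u2))
    by (field; exact Hu).
  rewrite Hc; f_equal; field; exact Hu.
Qed.

Lemma CP_pedal (Y : config) a u z4 z5 z6 : u <> (0, 0) ->
  Y 4%nat = pedal a u z4 -> Y 5%nat = pedal a u z5 -> Y 6%nat = pedal a u z6 -> CP Y = 0.
Proof.
  intros Hu H4 H5 H6; apply norm2_neq0 in Hu; unfold CP; rewrite H4, H5, H6.
  destruct a, u, z4, z5, z6; unfold_vec; field; exact Hu.
Qed.

Lemma cross_common_direction (x y : point) : cross x y = 0 ->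
  exists u, u <> (0, 0) /\ cross u x = 0 /\ cross u y = 0.
Proof.
  intro Hxy.
  destruct (Req_dec (norm2 x) 0) as [Hx | Hx].
  - apply norm2_eq0 in Hx; subst x.
    destruct (Req_dec (norm2 y) 0) as [Hy | Hy].
    + apply norm2_eq0 in Hy; subst y.
      exists (1, 0); unfold cross; simpl; split; [intro E; injection E; lra | split; ring].
    + exists y; unfold cross; simpl; repeat split; [|ring|ring].
      intro E; subst y; apply Hy; unfold_vec; ring.
  - exists x; unfold cross in *; repeat split; [|ring|exact Hxy].
    intro E; subst x; apply Hx; unfold_vec; ring.
Qed.

Lemma CP_eq0_line (Y : config) : CP Y = 0 ->
  exists a u, u <> (0, 0) /\ pedal a u (Y 4%nat) = Y 4%nat /\
    pedal a u (Y 5%nat) = Y 5%nat /\ pedal a u (Y 6%nat) = Y 6%nat.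
Proof.
  rewrite CP_cross; intro Hcp.
  destruct (cross_common_direction _ _ Hcp) as [u [Hu [H5 H6]]].
  exists (Y 4%nat), u; repeat split; auto; apply pedal_on_line; auto.
  destruct (Y 4%nat); unfold cross; unfold_vec; ring.
Qed.

(* Among lines of a given direction, the one through the centroid is best:
   moving the line off the centroid adds three times the squared offset. *)
Lemma line_cost_centroid_le x4 x5 x6 b v : v <> (0, 0) ->
  line_cost (centroid x4 x5 x6) v x4 x5 x6 <= line_cost b v x4 x5 x6.
Proof.
  intro Hv; unfold line_cost; rewrite !(line_dist2_cross _ _ _ Hv).
  apply norm2_neq0 in Hv.
  set (g := centroid x4 x5 x6).
  assert (Hoff : 0 <= 3 * cross v (vsub g b) ^ 2 / norm2 v).
  { pose proof (pow2_ge_0 (cross v (vsub g b))); pose proof (norm2_ge0 v).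
    apply Rmult_le_pos; [lra | apply Rlt_le, Rinv_0_lt_compat; lra]. }
  enough (E : cross v (vsub x4 b) ^ 2 / norm2 v + cross v (vsub x5 b) ^ 2 / norm2 v
              + cross v (vsub x6 b) ^ 2 / norm2 v
            = cross v (vsub x4 g) ^ 2 / norm2 v + cross v (vsub x5 g) ^ 2 / norm2 v
              + cross v (vsub x6 g) ^ 2 / norm2 v + 3 * cross v (vsub g b) ^ 2 / norm2 v)
    by lra.
  subst g; destruct x4, x5, x6, b, v; unfold cross, centroid in *; unfold_vec; field; exact Hv.
Qed.

Lemma centroid_residuals_sum x4 x5 x6 v : v <> (0, 0) ->
  let g := centroid x4 x5 x6 in
  vadd (vadd (vsub x4 (pedal g v x4)) (vsub x5 (pedal g v x5))) (vsub x6 (pedal g v x6)) = (0, 0).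
Proof.
  intro Hv; apply norm2_neq0 in Hv.
  destruct x4, x5, x6, v; unfold centroid; unfold_vec; f_equal; field; exact Hv.
Qed.

Lemma platform_cost_balanced k x y z : vadd (vadd x y) z = (0, 0) ->
  platform_cost k x y z = fst (platform_w k) * (norm2 x + norm2 y + norm2 z).
Proof.
  intro H; unfold platform_cost, sum_sq_cost; rewrite H; unfold_vec; ring.
Qed.

Lemma closest_Dist2_le_line_cost k K K' b v : is_closest k K K' -> v <> (0, 0) ->
  Dist2 k K K' <= fst (platform_w k) * line_cost b v (K 4%nat) (K 5%nat) (K 6%nat).
Proof.
  intros [_ Hmin] Hv.
  set (g := centroid (K 4%nat) (K 5%nat) (K 6%nat)).
  set (P := fun i => pedal g v (K i)).
  assert (HP : CP (fit_base k K P) = 0)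
    by (rewrite CP_fit_base; exact (CP_pedal P g v _ _ _ Hv eq_refl eq_refl eq_refl)).
  pose proof (proj1 (Dist_le_Dist2 _ _ _ _ _) (Hmin _ HP)) as Hle.
  rewrite Dist2_fit_base in Hle.
  unfold dlt, P in Hle; rewrite platform_cost_balanced in Hle
    by exact (centroid_residuals_sum _ _ _ v Hv).
  pose proof (line_cost_centroid_le (K 4%nat) (K 5%nat) (K 6%nat) b v Hv) as Hg.
  apply Rmult_le_compat_l with (r := fst (platform_w k)) in Hg;
    [|apply Rlt_le, platform_w_pos].
  exact (Rle_trans _ _ _ Hle Hg).
Qed.

Definition pedal_gap (a u : point) (K K' : config) : R :=
  norm2 (vsub (pedal a u (K 4%nat)) (K' 4%nat)) + norm2 (vsub (pedal a u (K 5%nat)) (K' 5%nat))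
  + norm2 (vsub (pedal a u (K 6%nat)) (K' 6%nat)).

Lemma pedal_gap_ge0 a u K K' : 0 <= pedal_gap a u K K'.
Proof.
  unfold pedal_gap.
  pose proof (norm2_ge0 (vsub (pedal a u (K 4%nat)) (K' 4%nat))).
  pose proof (norm2_ge0 (vsub (pedal a u (K 5%nat)) (K' 5%nat))).
  pose proof (norm2_ge0 (vsub (pedal a u (K 6%nat)) (K' 6%nat))).
  lra.
Qed.

Lemma pedal_gap_eq0 a u K K' : pedal_gap a u K K' = 0 ->
  K' 4%nat = pedal a u (K 4%nat) /\ K' 5%nat = pedal a u (K 5%nat) /\
  K' 6%nat = pedal a u (K 6%nat).
Proof.
  unfold pedal_gap; intro H.
  pose proof (norm2_ge0 (vsub (pedal a u (K 4%nat)) (K' 4%nat))).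
  pose proof (norm2_ge0 (vsub (pedal a u (K 5%nat)) (K' 5%nat))).
  pose proof (norm2_ge0 (vsub (pedal a u (K 6%nat)) (K' 6%nat))).
  repeat split; symmetry; apply vsub_eq0, norm2_eq0; lra.
Qed.

Lemma Dist2_ge_line_cost k K K' a u : u <> (0, 0) ->
  pedal a u (K' 4%nat) = K' 4%nat -> pedal a u (K' 5%nat) = K' 5%nat ->
  pedal a u (K' 6%nat) = K' 6%nat ->
  fst (platform_w k) * line_cost a u (K 4%nat) (K 5%nat) (K 6%nat)
    + fst (platform_w k) * pedal_gap a u K K' <= Dist2 k K K'.
Proof.
  intros Hu H4 H5 H6.
  assert (Hpyth : forall i, pedal a u (K' i) = K' i ->
    norm2 (dlt K K' i) = line_dist2 a u (K i) + norm2 (vsub (pedal a u (K i)) (K' i))).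
  { intros i Hi; unfold dlt; rewrite <- Hi at 1 2; apply pedal_pythagoras, Hu. }
  eapply Rle_trans; [|apply Dist2_ge_platform_cost].
  eapply Rle_trans; [|apply platform_cost_ge].
  rewrite (Hpyth 4%nat H4), (Hpyth 5%nat H5), (Hpyth 6%nat H6).
  unfold line_cost, pedal_gap; right; ring.
Qed.

Lemma closest_pedal_regression k (K K' : config) : is_closest k K K' ->
  exists a u : point,
    is_regression_line (K 4%nat) (K 5%nat) (K 6%nat) a u /\
    K' 4%nat = pedal a u (K 4%nat) /\ K' 5%nat = pedal a u (K 5%nat) /\
    K' 6%nat = pedal a u (K 6%nat).
Proof.
  intros Hcl.
  destruct (CP_eq0_line K' (proj1 Hcl)) as [a [u [Hu [H4 [H5 H6]]]]].
  exists a, u.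
  pose proof (Dist2_ge_line_cost k K K' a u Hu H4 H5 H6) as Hlow.
  destruct (platform_w_pos k) as [Hw _].
  pose proof (Rmult_le_pos _ _ (Rlt_le _ _ Hw) (pedal_gap_ge0 a u K K')) as Hgap.
  split; [split; [exact Hu|]|].
  - intros b v Hv.
    pose proof (closest_Dist2_le_line_cost k K K' b v Hcl Hv).
    apply Rmult_le_reg_l with (fst (platform_w k)); [exact Hw|].
    fold (line_cost a u (K 4%nat) (K 5%nat) (K 6%nat)) (line_cost b v (K 4%nat) (K 5%nat) (K 6%nat)).
    lra.
  - pose proof (closest_Dist2_le_line_cost k K K' a u Hcl Hu).
    apply pedal_gap_eq0, Rle_antisym; [|apply pedal_gap_ge0].
    apply Rmult_le_reg_l with (fst (platform_w k)); [exact Hw|]; lra.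
Qed.

Definition is_min {T : Type} (S : T -> Prop) (f : T -> R) (x : T) : Prop :=
  S x /\ forall y, S y -> f x <= f y.

Lemma is_min_transfer {T : Type} (S : T -> Prop) (f g : T -> R) :
  (forall x, S x -> exists y, S y /\ g y <= f x) ->
  (forall y, S y -> exists x, S x /\ f x <= g y) ->
  forall x, is_min S f x -> exists y, is_min S g y /\ g y = f x.
Proof.
  intros Hfg Hgf x [Sx Hx].
  destruct (Hfg x Sx) as [y [Sy Hy]].
  assert (Hlow : forall z, S z -> f x <= g z).
  { intros z Sz; destruct (Hgf z Sz) as [x' [Sx' Hx']].
    exact (Rle_trans _ _ _ (Hx x' Sx') Hx'). }
  exists y; split; [split; [exact Sy|]|].
  - intros z Sz; exact (Rle_trans _ _ _ Hy (Hlow z Sz)).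
  - apply Rle_antisym; [exact Hy | exact (Hlow y Sy)].
Qed.

Definition motion (c s : R) (ta tb x : point) : point := vadd (rot c s (vsub x ta)) tb.

Lemma motion_vsub c s ta tb x y :
  vsub (motion c s ta tb x) (motion c s ta tb y) = rot c s (vsub x y).
Proof. destruct ta, tb, x, y; unfold motion; unfold_vec; f_equal; ring. Qed.

Lemma CP_motion c s ta tb (Y : config) :
  CP (fun i => motion c s ta tb (Y i)) = (c ^ 2 + s ^ 2) * CP Y.
Proof.
  unfold CP, motion; destruct (Y 4%nat), (Y 5%nat), (Y 6%nat), ta, tb; unfold_vec; ring.
Qed.

Lemma norm2_rot c s x : in_SO2 c s -> norm2 (rot c s x) = norm2 x.
Proof.
  unfold in_SO2; intro H; destruct x as [x1 x2]; unfold norm2, dot, rot; simpl.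
  transitivity ((c ^ 2 + s ^ 2) * (x1 * x1 + x2 * x2)); [ring | rewrite H; ring].
Qed.

Lemma vadd_rot c s x y : vadd (rot c s x) (rot c s y) = rot c s (vadd x y).
Proof. destruct x, y; unfold_vec; f_equal; ring. Qed.

Lemma platform_cost_rot k c s x y z : in_SO2 c s ->
  platform_cost k (rot c s x) (rot c s y) (rot c s z) = platform_cost k x y z.
Proof.
  intro H; unfold platform_cost, sum_sq_cost; rewrite !vadd_rot, !(norm2_rot _ _ _ H).
  reflexivity.
Qed.

Section PoseChange.

Variables (k1 k2 k3 p4 p5 p6 : point) (ca sa cb sb : R) (ta tb : point).
Hypotheses (Ha : in_SO2 ca sa) (Hb : in_SO2 cb sb).

(* The rotation R_b R_a^-1. *)
Let c := cb * ca + sb * sa.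
Let s := sb * ca - cb * sa.
Let Ka := rpr_config k1 k2 k3 p4 p5 p6 ca sa ta.
Let Kb := rpr_config k1 k2 k3 p4 p5 p6 cb sb tb.

Lemma in_SO2_rel : in_SO2 c s.
Proof.
  revert Ha Hb; unfold in_SO2, c, s; intros H1 H2.
  transitivity ((ca ^ 2 + sa ^ 2) * (cb ^ 2 + sb ^ 2)); [ring | rewrite H1, H2; ring].
Qed.

Lemma motion_platform p :
  motion c s ta tb (vadd (rot ca sa p) ta) = vadd (rot cb sb p) tb.
Proof.
  revert Ha; unfold in_SO2, motion, c, s; intro H.
  destruct p, ta, tb; unfold_vec; f_equal; nsatz.
Qed.

Lemma dlt_motion Y i : (i = 4 \/ i = 5 \/ i = 6)%nat ->
  dlt Kb (fun j => motion c s ta tb (Y j)) i = rot c s (dlt Ka Y i).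
Proof.
  intros Hi; unfold dlt; rewrite <- (motion_vsub c s ta tb); f_equal.
  destruct Hi as [-> | [-> | ->]]; symmetry; apply motion_platform.
Qed.

Lemma Dist_pose_change kind (Y : config) :
  exists Z, CP Z = CP Y /\ Dist kind Kb Z <= Dist kind Ka Y.
Proof.
  set (M := fun j => motion c s ta tb (Y j)).
  exists (fit_base kind Kb M); split.
  - pose proof in_SO2_rel as Hrel; unfold in_SO2 in Hrel.
    rewrite CP_fit_base; unfold M; rewrite CP_motion, Hrel; ring.
  - apply Dist_le_Dist2; rewrite Dist2_fit_base; unfold M.
    rewrite !dlt_motion by auto.
    rewrite platform_cost_rot by exact in_SO2_rel.
    apply Dist2_ge_platform_cost.
Qed.

End PoseChange.

Theorem theorem1 :
  forall (k1 k2 k3 p4 p5 p6 : point) (kind : dist_kind),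
    (* closest configurations: platform points are pedal points on a line of regression *)
    (forall (c s : R) (t : point) (K' : config),
        in_SO2 c s ->
        is_closest kind (rpr_config k1 k2 k3 p4 p5 p6 c s t) K' ->
        let K := rpr_config k1 k2 k3 p4 p5 p6 c s t in
        exists a u : point,
          is_regression_line (K 4%nat) (K 5%nat) (K 6%nat) a u /\
          K' 4%nat = pedal a u (K 4%nat) /\
          K' 5%nat = pedal a u (K 5%nat) /\
          K' 6%nat = pedal a u (K 6%nat)) /\
    (* the minimal distance does not depend on the pose *)
    (forall (c1 s1 c2 s2 : R) (t1 t2 : point) (K1' : config),
        in_SO2 c1 s1 -> in_SO2 c2 s2 ->
        is_closest kind (rpr_config k1 k2 k3 p4 p5 p6 c1 s1 t1) K1' ->
        exists K2' : config,
          is_closest kind (rpr_config k1 k2 k3 p4 p5 p6 c2 s2 t2) K2' /\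
          Dist kind (rpr_config k1 k2 k3 p4 p5 p6 c2 s2 t2) K2'
          = Dist kind (rpr_config k1 k2 k3 p4 p5 p6 c1 s1 t1) K1').
Proof.
  intros k1 k2 k3 p4 p5 p6 kind; split.
  - intros c s t K' _ Hcl K; exact (closest_pedal_regression kind K K' Hcl).
  - intros c1 s1 c2 s2 t1 t2 K1' H1 H2 Hcl.
    apply (is_min_transfer (fun Y => CP Y = 0)); [| |exact Hcl];
      intros Y HY.
    + destruct (Dist_pose_change k1 k2 k3 p4 p5 p6 c1 s1 c2 s2 t1 t2 H1 H2 kind Y)
        as [Z [HZ Hle]].
      exists Z; rewrite HZ; auto.
    + destruct (Dist_pose_change k1 k2 k3 p4 p5 p6 c2 s2 c1 s1 t2 t1 H2 H1 kind Y)
        as [Z [HZ Hle]].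
      exists Z; rewrite HZ; auto.
Qed.
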